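(* There is a one-to-one correspondence between isomorphism classes of complex unitary 3-Leibniz algebras $\mathbb{V}$ and isomorphism classes of pairs $(\mathfrak{g},\mathbb{V})$ where $\mathfrak{g}$ is a metric real Lie algebra and $\mathbb{V}$ is a faithful complex unitary representation of $\mathfrak{g}$.
   Context: All vector spaces are finite-dimensional. A hermitian form $h$ on a complex vector space is complex linear in the first argument, antilinear in the second, satisfies $h(u,v)=\overline{h(v,u)}$, and is assumed nondegenerate. A complex unitary 3-Leibniz algebra is a complex vector space $\mathbb{V}$ with a hermitian form $h$ and a map $[\![-,-,-]\!]:\mathbb{V}^3\to\mathbb{V}$ which is complex linear in the first and third arguments and complex antilinear in the second, satisfying for all $v,w,x,y,z$: unitarity $h([\![v,w,x]\!],y)=h(x,[\![w,v,y]\!])$; symmetry $h([\![v,w,x]\!],y)=h([\![x,y,v]\!],w)$; fundamental identity $[\![x,y,[\![v,w,z]\!]]\!]=[\![[\![x,y,v]\!],w,z]\!]-[\![v,[\![y,x,w]\!],z]\!]+[\![v,w,[\![x,y,z]\!]]\!]$. An isomorphism of such algebras is a complex linear bijection preserving the bracket and $h$. A metric real Lie algebra is a real Lie algebra with a nondegenerate symmetric ad-invariant bilinear form (any signature). A complex unitary representation of $\mathfrak{g}$ is a Lie algebra homomorphism $\mathfrak{g}\to\mathfrak{u}(\mathbb{V})$, i.e. to complex linear maps with $h(x\cdot u,v)+h(u,x\cdot v)=0$; faithful means injective. Pairs $(\mathfrak{g}_V,\mathbb{V})$, $(\mathfrak{g}_W,\mathbb{W})$ (with $\mathfrak{g}$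 viewed inside $\mathfrak{u}$ via the faithful representation) are isomorphic if there is a complex linear isometry $\varphi:\mathbb{V}\to\mathbb{W}$ with $\mathfrak{g}_W=\varphi\circ\mathfrak{g}_V\circ\varphi^{-1}$ and $x\mapsto\varphi x\varphi^{-1}$ an isometry of metric Lie algebras. *)

(* Complex scalars are C := R[i] for R : realType (the real
   numbers of MathComp-Analysis); V = 'cV[C]_n (every finite-dimensional
   complex vector space is isomorphic to some C^n). *)
From HB Require Import structures.
From mathcomp Require Import all_boot all_order all_algebra.
From mathcomp Require Import complex.
From mathcomp Require Import reals.
Set Implicit Arguments. Unset Strict Implicit. Unset Printing Implicit Defensive.
Import Order.TTheory GRing.Theory Num.Theory.
Local Open Scope ring_scope.

Section Defs.
Variable R : realType.
Local Notation C := (R[i]).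

Definition RtoC (r : R) : C := Complex r 0.
Definition iC : C := Complex 0 1.

Definition clinear n m (f : 'cV[C]_n -> 'cV[C]_m) : Prop :=
  forall (a : C) (u v : 'cV[C]_n), f (a *: u + v) = a *: f u + f v.

Definition hermitian_form n (h : 'cV[C]_n -> 'cV[C]_n -> C) : Prop :=
  [/\ forall (a : C) u v w, h (a *: u + v) w = a * h u w + h v w,
      forall u v, h u v = (h v u)^*
    & forall u, (forall v, h u v = 0) -> u = 0].

Definition unitary3Leibniz n (h : 'cV[C]_n -> 'cV[C]_n -> C)
    (br : 'cV[C]_n -> 'cV[C]_n -> 'cV[C]_n -> 'cV[C]_n) : Prop :=
  [/\
      forall (a : C) v v' w x, br (a *: v + v') w x = a *: br v w x + br v' w x,
      forall (a : C) v w w' x, br v (a *: w + w') x = a^* *: br v w x + br v w' x,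
      forall (a : C) v w x x', br v w (a *: x + x') = a *: br v w x + br v w x',
      forall v w x y, h (br v w x) y = h x (br w v y)
    & [/\
      forall v w x y, h (br v w x) y = h (br x y v) w
    &
      forall x y v w z,
        br x y (br v w z) =
        br (br x y v) w z - br v (br y x w) z + br v w (br x y z)]].

Definition iso3Leibniz n m
    (h : 'cV[C]_n -> 'cV[C]_n -> C)
    (br : 'cV[C]_n -> 'cV[C]_n -> 'cV[C]_n -> 'cV[C]_n)
    (h' : 'cV[C]_m -> 'cV[C]_m -> C)
    (br' : 'cV[C]_m -> 'cV[C]_m -> 'cV[C]_m -> 'cV[C]_m) : Prop :=
  exists phi : 'cV[C]_n -> 'cV[C]_m,
    [/\ clinear phi, bijective phi,
        forall x y z, phi (br x y z) = br' (phi x) (phi y) (phi z)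
      & forall x y, h' (phi x) (phi y) = h x y].

Definition in_u n (h : 'cV[C]_n -> 'cV[C]_n -> C) (X : 'M[C]_n) : Prop :=
  forall u v, h (X *m u) v + h u (X *m v) = 0.

(** A pair (g, V): g is a real Lie algebra, realised (via the faithful
    representation) as a real Lie subalgebra of u(C^n, h) given by the
    predicate g, together with a metric B : g x g -> R (nondegenerate,
    symmetric, bilinear, ad-invariant).  Values of B outside g are irrelevant. *)
Definition metric_faithful_pair n (h : 'cV[C]_n -> 'cV[C]_n -> C)
    (g : 'M[C]_n -> Prop) (B : 'M[C]_n -> 'M[C]_n -> R) : Prop :=
  [/\
      forall X, g X -> in_u h X,
      g 0,
      forall (r : R) X Y, g X -> g Y -> g (RtoC r *: X + Y),
      forall X Y, g X -> g Y -> g (X * Y - Y * X)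
    & [/\
      forall (r : R) X Y Z, g X -> g Y -> g Z ->
         B (RtoC r *: X + Y) Z = r * B X Z + B Y Z,
      forall X Y, g X -> g Y -> B X Y = B Y X,
      forall X, g X -> (forall Y, g Y -> B X Y = 0) -> X = 0
    &
      forall X Y Z, g X -> g Y -> g Z ->
         B (X * Y - Y * X) Z + B Y (X * Z - Z * X) = 0]].

Definition conj_by n m (phi : 'cV[C]_n -> 'cV[C]_m) (X : 'M[C]_n) (Y : 'M[C]_m)
  : Prop := forall v, Y *m phi v = phi (X *m v).

Definition isoPair n m
    (h : 'cV[C]_n -> 'cV[C]_n -> C) (g : 'M[C]_n -> Prop) (B : 'M[C]_n -> 'M[C]_n -> R)
    (h' : 'cV[C]_m -> 'cV[C]_m -> C) (g' : 'M[C]_m -> Prop) (B' : 'M[C]_m -> 'M[C]_m -> R)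
  : Prop :=
  exists phi : 'cV[C]_n -> 'cV[C]_m,
    [/\ clinear phi, bijective phi,
        forall x y, h' (phi x) (phi y) = h x y
      & [/\ (forall X, g X -> exists2 Y, g' Y & conj_by phi X Y),
        (forall Y, g' Y -> exists2 X, g X & conj_by phi X Y)
      & forall X1 X2 Y1 Y2, g X1 -> g X2 -> conj_by phi X1 Y1 -> conj_by phi X2 Y2 ->
           B' Y1 Y2 = B X1 X2]].

(** The correspondence of the paper: the 3-bracket is [[x,y,z]] = D(x,y).z,
    where D(x,y) = X1 + i X2 lies in the complexification of g and is
    defined by (X, D(x,y)) = h(X.x, y) for all X in g, the metric being
    extended complex-bilinearly. *)
Definition corresponds n (h : 'cV[C]_n -> 'cV[C]_n -> C)
    (br : 'cV[C]_n -> 'cV[C]_n -> 'cV[C]_n -> 'cV[C]_n)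
    (g : 'M[C]_n -> Prop) (B : 'M[C]_n -> 'M[C]_n -> R) : Prop :=
  forall x y, exists X1 X2,
    [/\ g X1, g X2,
        forall z, br x y z = (X1 + iC *: X2) *m z
      & forall X, g X -> h (X *m x) y = RtoC (B X X1) + iC * RtoC (B X X2)].

End Defs.

From HB Require Import structures.
From mathcomp Require Import all_boot all_order all_algebra.
From mathcomp Require Import complex reals.
From mathcomp Require Import ring lra.
From Stdlib Require Import Classical ClassicalEpsilon.
Set Implicit Arguments. Unset Strict Implicit. Unset Printing Implicit Defensive.
Import Order.TTheory GRing.Theory Num.Theory.
Local Open Scope ring_scope.

(* Given a unitary 3-Leibniz algebra, the operators D(x,y) = [[x,y,-]] act by
   derivations (fundamental identity), so the skew-hermitian sums of D's form a Lie
   subalgebra g of u(V).  On g the form B(X, sum D(x_i,y_i)) = Re sum h(X x_i, y_i) is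
   well defined by the symmetry axiom, ad-invariant and nondegenerate, and
   D(x,y) = X1 + i X2 with X1, X2 in g.  Conversely, for a metric Lie algebra g in
   u(V), Riesz representation for the nondegenerate metric defines D(x,y) = W1 + i W2
   in the complexification of g by (X, D(x,y)) = h(X x, y); ad-invariance makes D
   g-equivariant, which is the fundamental identity.  Faithfulness and nondegeneracy
   force the components of the D(x,y) to span g, so an isometry intertwining the
   brackets conjugates g onto g' isometrically, and conversely. *)

Section ComplexScalars.
Variable R : realType.
Local Notation C := R[i].

Lemma RtoCD (a b : R) : RtoC (a + b) = RtoC a + RtoC b.
Proof. by rewrite /RtoC; simpc. Qed.
Lemma RtoCM (a b : R) : RtoC (a * b) = RtoC a * RtoC b.
Proof. by rewrite /RtoC; simpc. Qed.
Lemma RtoCN (a : R) : RtoC (- a) = - RtoC a.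
Proof. by rewrite /RtoC; simpc. Qed.
Lemma RtoC0 : RtoC 0 = 0 :> C. Proof. by []. Qed.
Lemma RtoC1 : RtoC 1 = 1 :> C. Proof. by []. Qed.
Lemma conj_RtoC (a : R) : (RtoC a)^* = RtoC a.
Proof. by rewrite /RtoC; simpc. Qed.

Lemma iC_sqr : iC R * iC R = -1.
Proof. by rewrite /iC; simpc. Qed.
Lemma conj_iC : (iC R)^* = - iC R.
Proof. by rewrite /iC; simpc. Qed.

Lemma complex_ReIm (c : C) : c = RtoC (complex.Re c) + iC R * RtoC (complex.Im c).
Proof. by case: c => a b; rewrite /RtoC /iC; simpc. Qed.

Lemma RtoC_ReIm_inj (a b c d : R) :
  RtoC a + iC R * RtoC b = RtoC c + iC R * RtoC d -> a = c /\ b = d.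
Proof. by rewrite /RtoC /iC; simpc; case. Qed.

Lemma ReD (c d : C) : complex.Re (c + d) = complex.Re c + complex.Re d.
Proof. by case: c; case: d. Qed.
Lemma ImD (c d : C) : complex.Im (c + d) = complex.Im c + complex.Im d.
Proof. by case: c; case: d. Qed.
Lemma ReN (c : C) : complex.Re (- c) = - complex.Re c. Proof. by case: c. Qed.
Lemma Re_RtoCM (r : R) (c : C) : complex.Re (RtoC r * c) = r * complex.Re c.
Proof. by case: c => a b /=; rewrite mul0r subr0. Qed.
Lemma Im_RtoCM (r : R) (c : C) : complex.Im (RtoC r * c) = r * complex.Im c.
Proof. by case: c => a b /=; rewrite mul0r addr0. Qed.
Lemma Re_iCM (c : C) : complex.Re (iC R * c) = - complex.Im c.
Proof. by case: c => a b /=; ring. Qed.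
Lemma Re_addJ (c : C) : complex.Re (c + c^*) = 2 * complex.Re c.
Proof. by case: c => a b /=; ring. Qed.

Lemma iCM_eqN (t : C) : iC R * t = - (iC R * t) -> t = 0.
Proof. by case: t => p q; rewrite /iC /= => -[E1 E2]; congr Complex; lra. Qed.

End ComplexScalars.

Lemma mx_ext (F : pzSemiRingType) n m (A B : 'M[F]_(m, n)) :
  (forall u : 'cV[F]_n, A *m u = B *m u) -> A = B.
Proof.
move=> H; apply/matrixP => i j.
by have := H (delta_mx j 0); rewrite -!colE => /colP/(_ i); rewrite !mxE.
Qed.

Section RealSubspaces.
Variables (R : realType) (n : nat).
Local Notation C := R[i].
Local Notation T := 'M[C]_n.

Definition real_subspace (P : T -> Prop) :=
  P 0 /\ forall (r : R) X Y, P X -> P Y -> P (RtoC r *: X + Y).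

Definition rlinear (P : T -> Prop) (f : T -> R) :=
  forall (r : R) X Y, P X -> P Y -> f (RtoC r *: X + Y) = r * f X + f Y.

Definition rcomb k (c : 'rV[R]_k) (b : 'I_k -> T) : T :=
  \sum_(i < k) RtoC (c 0 i) *: b i.

Definition rfree k (b : 'I_k -> T) := forall c, rcomb c b = 0 -> c = 0.

Section Subspace.
Variables (P : T -> Prop) (sP : real_subspace P).

Lemma rsub0 : P 0. Proof. by case: sP. Qed.
Lemma rsubZD r X Y : P X -> P Y -> P (RtoC r *: X + Y).
Proof. by case: sP => _; apply. Qed.
Lemma rsubZ r X : P X -> P (RtoC r *: X).
Proof. by move=> PX; have := rsubZD r PX rsub0; rewrite addr0. Qed.
Lemma rsubD X Y : P X -> P Y -> P (X + Y).
Proof. by move=> PX PY; have := rsubZD 1 PX PY; rewrite RtoC1 scale1r. Qed.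
Lemma rsubN X : P X -> P (- X).
Proof. by move=> PX; have := rsubZ (-1) PX; rewrite RtoCN RtoC1 scaleN1r. Qed.
Lemma rsubB X Y : P X -> P Y -> P (X - Y).
Proof. by move=> PX PY; apply: rsubD PX (rsubN PY). Qed.

Lemma rsub_rcomb k (c : 'rV[R]_k) b : (forall i, P (b i)) -> P (rcomb c b).
Proof.
move=> Pb; apply: (big_ind P) => [|X Y|i _];
  [exact: rsub0 | exact: rsubD | exact: rsubZ].
Qed.

Lemma rlinear_rcomb f k (c : 'rV[R]_k) b : rlinear P f ->
  (forall i, P (b i)) -> f (rcomb c b) = \sum_i c 0 i * f (b i).
Proof.
move=> fL Pb.
have f0 : f 0 = 0 by have := fL 1 0 0 rsub0 rsub0; rewrite scaler0 addr0; lra.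
suff [] : P (rcomb c b) /\ f (rcomb c b) = \sum_i c 0 i * f (b i) by [].
apply: (big_ind2 (fun X y => P X /\ f X = y)); first by split; [exact: rsub0|].
  move=> X1 y1 X2 y2 [PX1 <-] [PX2 <-]; split; first exact: rsubD.
  by have := fL 1 X1 X2 PX1 PX2; rewrite RtoC1 scale1r mul1r.
move=> i _; split; first exact: rsubZ.
by rewrite -[_ *: _]addr0 fL ?f0 ?addr0 //; exact: rsub0.
Qed.

End Subspace.

Lemma rcombD k (c d : 'rV[R]_k) b : rcomb (c + d) b = rcomb c b + rcomb d b.
Proof.
by rewrite /rcomb -big_split; apply: eq_bigr => i _; rewrite mxE RtoCD scalerDl.
Qed.

Lemma rcombZ k (r : R) (c : 'rV[R]_k) b : rcomb (r *: c) b = RtoC r *: rcomb c b.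
Proof.
by rewrite /rcomb scaler_sumr; apply: eq_bigr => i _; rewrite mxE RtoCM scalerA.
Qed.

Lemma rcomb0 k (b : 'I_k -> T) : rcomb 0 b = 0.
Proof. by rewrite /rcomb big1 // => i _; rewrite mxE scale0r. Qed.

Lemma rcomb_sum k I (s : seq I) (F : I -> 'rV[R]_k) b :
  rcomb (\sum_(i <- s) F i) b = \sum_(i <- s) rcomb (F i) b.
Proof. by elim/big_rec2: _ => [|i y1 y2 _ <-]; rewrite ?rcomb0 ?rcombD. Qed.

Lemma rcomb_mul k p (D : 'rV[R]_p) (A : 'M[R]_(p, k)) b :
  rcomb (D *m A) b = rcomb D (fun j => rcomb (row j A) b).
Proof.
rewrite mulmx_sum_row rcomb_sum /rcomb; apply: eq_bigr => j _.
by rewrite -/(rcomb _ _) rcombZ.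
Qed.

Definition realmx (X : T) : 'rV[R]_(n * n + n * n) :=
  row_mx (mxvec (map_mx (@complex.Re R) X)) (mxvec (map_mx (@complex.Im R) X)).

Lemma realmx_rlinear (r : R) X Y : realmx (RtoC r *: X + Y) = r *: realmx X + realmx Y.
Proof.
rewrite /realmx scale_row_mx add_row_mx -!linearZ -!linearD /=.
by congr (row_mx (mxvec _) (mxvec _)); apply/matrixP => i j;
  rewrite !mxE ?ReD ?ImD ?Re_RtoCM ?Im_RtoCM.
Qed.

Lemma realmx_eq0 X : realmx X = 0 -> X = 0.
Proof.
rewrite /realmx -row_mx0 => /eq_row_mx[/eqP + /eqP]; rewrite !mxvec_eq0.
move=> /eqP/matrixP ERe /eqP/matrixP EIm; apply/matrixP => i j.
by move: (ERe i j) (EIm i j); rewrite !mxE; case: (X i j) => a b /= -> ->.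
Qed.

Lemma realmx_rcomb k (c : 'rV[R]_k) b :
  realmx (rcomb c b) = c *m \matrix_(i < k) realmx (b i).
Proof.
have realmx0 : realmx 0 = 0.
  by rewrite /realmx -row_mx0; congr row_mx; apply/eqP;
    rewrite mxvec_eq0; apply/eqP/matrixP => i j; rewrite !mxE.
rewrite mulmx_sum_row /rcomb.
elim/big_rec2: _ => [|i y1 y2 _ <-]; first exact: realmx0.
by rewrite -[RtoC _ *: _ + _]/(RtoC _ *: _ + _) realmx_rlinear rowK.
Qed.

Lemma rfree_size k (b : 'I_k -> T) : rfree b -> (k <= n * n + n * n)%N.
Proof.
move=> fb; have /eqP <- : row_free (\matrix_(i < k) realmx (b i)).
  by apply: inj_row_free => c; rewrite -realmx_rcomb => /realmx_eq0/fb.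
exact: rank_leq_col.
Qed.

Definition snoc_fam k (b : 'I_k -> T) (X : T) : 'I_k.+1 -> T :=
  fun i => if unlift ord_max i is Some j then b j else X.

Lemma rcomb_snoc k (c : 'rV[R]_k.+1) b X :
  rcomb c (snoc_fam b X) =
  rcomb (\row_j c 0 (lift ord_max j)) b + RtoC (c 0 ord_max) *: X.
Proof.
rewrite /rcomb big_ord_recr /= /snoc_fam unlift_none; congr (_ + _).
apply: eq_bigr => j _; rewrite mxE.
have -> : widen_ord (leqnSn k) j = lift ord_max j.
  by apply: val_inj; rewrite /= /bump leqNgt ltn_ord.
by rewrite liftK.
Qed.

Lemma rfree_snoc k (b : 'I_k -> T) X :
  rfree b -> ~ (exists c, X = rcomb c b) -> rfree (snoc_fam b X).
Proof.
move=> fb nX c; rewrite rcomb_snoc => E.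
have cX0 : c 0 ord_max = 0.
  apply: NNPP => /eqP cX_neq0; apply: nX.
  exists ((- (c 0 ord_max)^-1) *: \row_j c 0 (lift ord_max j)).
  rewrite rcombZ (_ : rcomb _ b = - (RtoC (c 0 ord_max) *: X)).
    by rewrite scalerN scalerA -RtoCM mulNr mulVf // RtoCN RtoC1 scaleN1r opprK.
  by apply/eqP; rewrite -addr_eq0 E.
move: E; rewrite cX0 scale0r addr0 => /fb /rowP E.
apply/rowP => i; rewrite mxE; case: (unliftP ord_max i) => [j ->|->] //.
by move: (E j); rewrite !mxE.
Qed.

(* A maximal free family exists because free families have at most 2n^2 members. *)
Lemma real_basis_exists P : real_subspace P -> exists k (b : 'I_k -> T),
  [/\ forall i, P (b i), forall X, P X -> exists c, X = rcomb c b & rfree b].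
Proof.
move=> sP.
pose freeP k := exists b : 'I_k -> T, (forall i, P (b i)) /\ rfree b.
have [k [[b [Pb fb]] nfree]] : exists k, freeP k /\ ~ freeP k.+1.
  apply: NNPP => nmax.
  have freeS k : freeP k -> freeP k.+1.
    by move=> fk; apply: NNPP => nfk; apply: nmax; exists k.
  have : freeP (n * n + n * n).+1.
    elim: (n * n + n * n).+1 => [|m]; last exact: freeS.
    by exists (fun=> 0); split=> [|c _]; [case | apply/rowP; case].
  by case=> b [_ /rfree_size]; rewrite ltnn.
exists k, b; split=> // X PX; apply: NNPP => nX; apply: nfree.
exists (snoc_fam b X); split; last exact: rfree_snoc.
by move=> i; rewrite /snoc_fam; case: unlift.
Qed.

End RealSubspaces.

Section NondegenerateForm.
Variables (R : realType) (n : nat).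
Local Notation C := R[i].
Local Notation T := 'M[C]_n.
Variables (P : T -> Prop) (B : T -> T -> R).
Hypothesis sP : real_subspace P.
Hypothesis BL : forall (r : R) X Y Z, P X -> P Y -> P Z ->
  B (RtoC r *: X + Y) Z = r * B X Z + B Y Z.
Hypothesis BS : forall X Y, P X -> P Y -> B X Y = B Y X.
Hypothesis BN : forall X, P X -> (forall Y, P Y -> B X Y = 0) -> X = 0.

Lemma rform_rlinearl W : P W -> rlinear P (B^~ W).
Proof. by move=> PW r X Y PX PY; apply: BL. Qed.

Lemma rform_rlinearr W : P W -> rlinear P (B W).
Proof.
move=> PW r X Y PX PY.
rewrite BS //; last exact: rsubZD.
by rewrite BL // !(BS PW).
Qed.

Lemma rformZDr (r : R) X Y Z : P X -> P Y -> P Z ->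
  B Z (RtoC r *: X + Y) = r * B Z X + B Z Y.
Proof. by move=> PX PY PZ; apply: rform_rlinearr. Qed.

Lemma rform0r Z : P Z -> B Z 0 = 0.
Proof.
move=> PZ; have := rformZDr 1 (rsub0 sP) (rsub0 sP) PZ.
by rewrite scaler0 addr0; lra.
Qed.

Lemma rformDr X Y Z : P X -> P Y -> P Z -> B Z (X + Y) = B Z X + B Z Y.
Proof. by move=> PX PY PZ; have := rformZDr 1 PX PY PZ; rewrite RtoC1 scale1r mul1r. Qed.

Lemma rformNr X Z : P X -> P Z -> B Z (- X) = - B Z X.
Proof.
move=> PX PZ; have := rformZDr (-1) PX (rsub0 sP) PZ.
by rewrite addr0 RtoCN RtoC1 scaleN1r rform0r // addr0 mulN1r.
Qed.

Lemma rformBr X Y Z : P X -> P Y -> P Z -> B Z (X - Y) = B Z X - B Z Y.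
Proof. by move=> PX PY PZ; rewrite rformDr ?rformNr //; exact: rsubN. Qed.

Section Gram.
Variables (k : nat) (b : 'I_k -> T).
Hypothesis Pb : forall i, P (b i).

Definition gram : 'M[R]_k := \matrix_(i, j) B (b i) (b j).

Lemma rform_rcomb (c d : 'rV[R]_k) :
  B (rcomb c b) (rcomb d b) = (c *m gram *m d^T) 0 0.
Proof.
have Pc := rsub_rcomb sP c Pb.
rewrite (rlinear_rcomb sP d (rform_rlinearr Pc) Pb) mxE.
apply: eq_bigr => j _; rewrite !mxE mulrC; congr (_ * _).
rewrite (rlinear_rcomb sP c (rform_rlinearl (Pb j)) Pb).
by apply: eq_bigr => i _; rewrite mxE.
Qed.

End Gram.

Lemma riesz_repr f : rlinear P f -> exists2 Y, P Y & forall X, P X -> B X Y = f X.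
Proof.
move=> fL; have [k [b [Pb spanb fb]]] := real_basis_exists sP.
have gram_unit : gram b \in unitmx.
  rewrite -row_free_unit; apply: inj_row_free => c cG0; apply: fb.
  apply: BN => [|Y PY]; first exact: rsub_rcomb.
  by have [d ->] := spanb Y PY; rewrite rform_rcomb // cG0 mul0mx mxE.
pose fv : 'rV[R]_k := \row_i f (b i).
exists (rcomb (fv *m (invmx (gram b))^T) b); first exact: rsub_rcomb.
move=> X PX; have [c ->] := spanb X PX.
rewrite rform_rcomb // trmx_mul trmxK mulmxA mulmxK // (rlinear_rcomb sP c fL Pb).
by rewrite mxE; apply: eq_bigr => i _; rewrite !mxE.
Qed.

Lemma subspace_orthogonal0_full S : real_subspace S -> (forall X, S X -> P X) ->
  (forall X, P X -> (forall Y, S Y -> B X Y = 0) -> X = 0) ->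
  forall X, P X -> S X.
Proof.
move=> sS SP SN X PX.
have [k [b [Pb spanb fb]]] := real_basis_exists sP.
have [p [s [Ss spans _]]] := real_basis_exists sS.
have [a Ea] := fin_all_exists (fun j => spanb _ (SP _ (Ss j))).
pose A : 'M[R]_(p, k) := \matrix_j a j.
have free_GA : row_free (gram b *m A^T).
  apply: inj_row_free => c cGA0; apply: fb.
  apply: SN => [|Y SY]; first exact: rsub_rcomb.
  have [e ->] := spans Y SY.
  have Bc_lin := rform_rlinearr (rsub_rcomb sP c Pb).
  rewrite (rlinear_rcomb sP e Bc_lin (fun j => SP _ (Ss j))).
  rewrite big1 // => j _.
  rewrite Ea rform_rcomb //.
  have -> : (c *m gram b *m (a j)^T) 0 0 = (c *m gram b *m A^T) 0 j.
    by rewrite !mxE; apply: eq_bigr => l _; rewrite !mxE.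
  by rewrite -mulmxA cGA0 mxE mulr0.
(* Row-freeness of the Gram matrix of [b] against the basis [s] of [S] makes [A] full. *)
have full_A : row_full A.
  rewrite /row_full eqn_leq rank_leq_col /=.
  by have := mxrankM_maxr (gram b) A^T; rewrite mxrank_tr (eqP free_GA).
have [c ->] := spanb X PX; have /submxP [D ->] := submx_full c full_A.
by rewrite rcomb_mul; apply: rsub_rcomb => // j; rewrite rowK -Ea.
Qed.

End NondegenerateForm.

Section HermitianForm.
Variables (R : realType) (n : nat).
Local Notation C := R[i].
Local Notation V := 'cV[C]_n.
Variable h : V -> V -> C.
Hypothesis hf : hermitian_form h.

Lemma hermZDl a u v w : h (a *: u + v) w = a * h u w + h v w.
Proof. by case: hf => H _ _; apply: H. Qed.
Lemma herm_conj u v : h u v = (h v u)^*.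
Proof. by case: hf => _ H _; apply: H. Qed.
Lemma herm_nondegl u : (forall v, h u v = 0) -> u = 0.
Proof. by case: hf => _ _ H; apply: H. Qed.

Lemma herm0l w : h 0 w = 0.
Proof.
by have := hermZDl 1 0 0 w; rewrite scaler0 addr0 mul1r -{1}[h 0 w]add0r => /addIr.
Qed.
Lemma hermDl u v w : h (u + v) w = h u w + h v w.
Proof. by rewrite -[u]scale1r hermZDl mul1r scale1r. Qed.
Lemma hermZl a u w : h (a *: u) w = a * h u w.
Proof. by rewrite -[_ *: _]addr0 hermZDl herm0l addr0. Qed.
Lemma hermNl u w : h (- u) w = - h u w.
Proof. by rewrite -scaleN1r hermZl mulN1r. Qed.
Lemma hermBl u v w : h (u - v) w = h u w - h v w.
Proof. by rewrite hermDl hermNl. Qed.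
Lemma herm0r w : h w 0 = 0.
Proof. by rewrite herm_conj herm0l conjC0. Qed.
Lemma hermDr u v w : h w (u + v) = h w u + h w v.
Proof. by rewrite herm_conj hermDl rmorphD /= -!herm_conj. Qed.
Lemma hermZr a u w : h w (a *: u) = a^* * h w u.
Proof. by rewrite herm_conj hermZl rmorphM /= -herm_conj. Qed.
Lemma hermNr u w : h w (- u) = - h w u.
Proof. by rewrite herm_conj hermNl rmorphN /= -herm_conj. Qed.
Lemma hermBr u v w : h w (u - v) = h w u - h w v.
Proof. by rewrite hermDr hermNr. Qed.
Lemma herm_nondegr v : (forall u, h u v = 0) -> v = 0.
Proof. by move=> H; apply: herm_nondegl => u; rewrite herm_conj H conjC0. Qed.

Lemma herm_suml I (s : seq I) (F : I -> V) w :
  h (\sum_(i <- s) F i) w = \sum_(i <- s) h (F i) w.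
Proof. by elim/big_rec2: _ => [|i y1 y2 _ <-]; rewrite ?herm0l ?hermDl. Qed.
Lemma herm_sumr I (s : seq I) (F : I -> V) w :
  h w (\sum_(i <- s) F i) = \sum_(i <- s) h w (F i).
Proof. by elim/big_rec2: _ => [|i y1 y2 _ <-]; rewrite ?herm0r ?hermDr. Qed.

Lemma herm_injl x y : (forall v, h x v = h y v) -> x = y.
Proof.
by move=> H; apply/subr0_eq/herm_nondegl => v; rewrite hermBl H subrr.
Qed.

Lemma herm_mx_inj (X Y : 'M[C]_n) :
  (forall u v, h (X *m u) v = h (Y *m u) v) -> X = Y.
Proof. by move=> H; apply: mx_ext => u; apply: herm_injl => v; exact: H. Qed.

Lemma in_u_skew X u v : in_u h X -> h (X *m u) v = - h u (X *m v).
Proof. by move=> /(_ u v)/eqP; rewrite addr_eq0 => /eqP. Qed.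

Lemma in_u0 : in_u h 0.
Proof. by move=> u v; rewrite !mul0mx herm0l herm0r addr0. Qed.

Lemma in_uZD (r : R) X Y : in_u h X -> in_u h Y -> in_u h (RtoC r *: X + Y).
Proof.
move=> uX uY u v; rewrite !mulmxDl -!scalemxAl hermDl hermZl hermDr hermZr conj_RtoC.
by rewrite (in_u_skew u v uX) (in_u_skew u v uY); ring.
Qed.

Lemma in_u_comm X Y : in_u h X -> in_u h Y -> in_u h (X * Y - Y * X).
Proof.
move=> uX uY u v; rewrite -!mulmxE !mulmxBl -!mulmxA hermBl hermBr.
by rewrite !(in_u_skew _ _ uX) !(in_u_skew _ _ uY) !(in_u_skew _ _ uX); ring.
Qed.

End HermitianForm.

Section SemilinearMaps.
Variables (R : realType) (n : nat) (W : lmodType R[i]).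
Variables (sigma : R[i] -> R[i]) (f : 'cV[R[i]]_n -> W).
Hypothesis sigma1 : sigma 1 = 1.
Hypothesis fZD : forall a u v, f (a *: u + v) = sigma a *: f u + f v.

Lemma semilinD u v : f (u + v) = f u + f v.
Proof. by rewrite -[u]scale1r fZD sigma1 !scale1r. Qed.
Lemma semilin0 : f 0 = 0.
Proof. by apply/(addrI (f 0)); rewrite -semilinD !addr0. Qed.
Lemma semilinZ a u : f (a *: u) = sigma a *: f u.
Proof. by rewrite -[_ *: u]addr0 fZD semilin0 addr0. Qed.
Lemma semilinN u : f (- u) = - f u.
Proof. by apply/(addrI (f u)); rewrite -semilinD !subrr semilin0. Qed.
Lemma semilin_sum I (s : seq I) (F : I -> 'cV_n) :
  f (\sum_(i <- s) F i) = \sum_(i <- s) f (F i).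
Proof. by elim/big_rec2: _ => [|i y1 y2 _ <-]; rewrite ?semilin0 ?semilinD. Qed.

End SemilinearMaps.

Section LeibnizToPair.
Variables (R : realType) (n : nat).
Local Notation C := R[i].
Local Notation V := 'cV[C]_n.
Local Notation M := 'M[C]_n.
Variables (h : V -> V -> C) (br : V -> V -> V -> V).
Hypotheses (hf : hermitian_form h) (UL : unitary3Leibniz h br).

Lemma brZD1 w x a u u' : br (a *: u + u') w x = a *: br u w x + br u' w x.
Proof. by case: UL => H _ _ _ _; apply: H. Qed.
Lemma brZD2 v x a w w' : br v (a *: w + w') x = a^* *: br v w x + br v w' x.
Proof. by case: UL => _ H _ _ _; apply: H. Qed.
Lemma brZD3 v w a x x' : br v w (a *: x + x') = a *: br v w x + br v w x'.
Proof. by case: UL => _ _ H _ _; apply: H. Qed.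
Lemma br_unitary v w x y : h (br v w x) y = h x (br w v y).
Proof. by case: UL => _ _ _ H _; apply: H. Qed.
Lemma br_symmetry v w x y : h (br v w x) y = h (br x y v) w.
Proof. by case: UL => _ _ _ _ [H _]; apply: H. Qed.
Lemma br_fundamental x y v w z : br x y (br v w z) =
  br (br x y v) w z - br v (br y x w) z + br v w (br x y z).
Proof. by case: UL => _ _ _ _ [_ H]; apply: H. Qed.

Lemma brZ1 a v w x : br (a *: v) w x = a *: br v w x.
Proof.
apply: (semilinZ (sigma := id) (f := fun v => br v w x)
  (erefl _) (brZD1 w x)).
Qed.
Lemma brZ3 a v w x : br v w (a *: x) = a *: br v w x.
Proof.
apply: (semilinZ (sigma := id) (f := br v w)
  (erefl _) (brZD3 v w)).
Qed.
Lemma brZ2 a v w x : br v (a *: w) x = a^* *: br v w x.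
Proof.
apply: (semilinZ (sigma := Num.conj) (f := fun w => br v w x)
  (conjC1 _) (brZD2 v x)).
Qed.
Lemma brN1 v w x : br (- v) w x = - br v w x.
Proof.
apply: (semilinN (sigma := id) (f := fun v => br v w x)
  (erefl _) (brZD1 w x)).
Qed.
Lemma brN2 v w x : br v (- w) x = - br v w x.
Proof.
apply: (semilinN (sigma := Num.conj) (f := fun w => br v w x)
  (conjC1 _) (brZD2 v x)).
Qed.
Lemma br_sum1 I (s : seq I) (F : I -> V) w x :
  br (\sum_(i <- s) F i) w x = \sum_(i <- s) br (F i) w x.
Proof.
apply: (semilin_sum (sigma := id) (f := fun v => br v w x)
  (erefl _) (brZD1 w x)).
Qed.
Lemma br_sum2 I (s : seq I) (F : I -> V) v x :
  br v (\sum_(i <- s) F i) x = \sum_(i <- s) br v (F i) x.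
Proof.
apply: (semilin_sum (sigma := Num.conj) (f := fun w => br v w x)
  (conjC1 _) (brZD2 v x)).
Qed.
Lemma br_sum3 I (s : seq I) (F : I -> V) v w :
  br v w (\sum_(i <- s) F i) = \sum_(i <- s) br v w (F i).
Proof.
apply: (semilin_sum (sigma := id) (f := br v w)
  (erefl _) (brZD3 v w)).
Qed.

Definition Dmx (x y : V) : M := \matrix_(i, j) (br x y (delta_mx j 0)) i 0.

Lemma DmxE x y z : Dmx x y *m z = br x y z.
Proof.
have {2}-> : z = \sum_(j < n) z j 0 *: delta_mx j 0.
  apply/colP => i; rewrite summxE (bigD1 i) //= big1 ?addr0 => [|j /negPf nji].
    by rewrite !mxE !eqxx mulr1.
  by rewrite !mxE eq_sym nji mulr0.
rewrite br_sum3; apply/colP => i.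
rewrite summxE mxE; apply: eq_bigr => j _.
by rewrite brZ3 !mxE mulrC; congr (_ * br _ _ _ _ _); apply: val_inj.
Qed.

Lemma DmxZ1 a v w : Dmx (a *: v) w = a *: Dmx v w.
Proof. by apply: mx_ext => z; rewrite -scalemxAl !DmxE brZ1. Qed.
Lemma DmxZ2 a v w : Dmx v (a *: w) = a^* *: Dmx v w.
Proof. by apply: mx_ext => z; rewrite -scalemxAl !DmxE brZ2. Qed.
Lemma DmxN1 v w : Dmx (- v) w = - Dmx v w.
Proof. by apply: mx_ext => z; rewrite mulNmx !DmxE brN1. Qed.
Lemma DmxN2 v w : Dmx v (- w) = - Dmx v w.
Proof. by apply: mx_ext => z; rewrite mulNmx !DmxE brN2. Qed.

Definition Dsum (s : seq (V * V)) : M := \sum_(p <- s) Dmx p.1 p.2.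
Definition swap_pairs (s : seq (V * V)) := [seq (p.2, p.1) | p <- s].
Definition pairing (X : M) (s : seq (V * V)) := \sum_(p <- s) h (X *m p.1) p.2.

Lemma DsumE s z : Dsum s *m z = \sum_(p <- s) br p.1 p.2 z.
Proof. by rewrite /Dsum mulmx_suml; apply: eq_bigr => p _; exact: DmxE. Qed.

Lemma Dsum_cat s1 s2 : Dsum (s1 ++ s2) = Dsum s1 + Dsum s2.
Proof. by rewrite /Dsum big_cat. Qed.

Lemma Dsum_scale a s : Dsum [seq (a *: p.1, p.2) | p <- s] = a *: Dsum s.
Proof. by rewrite /Dsum big_map scaler_sumr; apply: eq_bigr => p _; rewrite DmxZ1. Qed.

Lemma pairingZD a X Y s : pairing (a *: X + Y) s = a * pairing X s + pairing Y s.
Proof.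
rewrite /pairing mulr_sumr -big_split; apply: eq_bigr => p _.
by rewrite mulmxDl -scalemxAl hermZDl.
Qed.

(* The symmetry axiom makes the pairing of two sums of [D]'s symmetric. *)
Lemma pairing_Dsum s' s : pairing (Dsum s') s = \sum_(q <- s') h (Dsum s *m q.1) q.2.
Proof.
rewrite /pairing.
under eq_bigr => p _ do rewrite DsumE (herm_suml hf).
under [in RHS]eq_bigr => q _ do rewrite DsumE (herm_suml hf).
rewrite exchange_big /=; apply: eq_bigr => q _; apply: eq_bigr => p _.
exact: br_symmetry.
Qed.

Lemma Dsum_adjoint s u v : h (Dsum s *m u) v = h u (Dsum (swap_pairs s) *m v).
Proof.
rewrite DsumE (herm_suml hf) DsumE (herm_sumr hf) /swap_pairs big_map.
by apply: eq_bigr => p _; exact: br_unitary.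
Qed.

Lemma Dsum_swap_in_u s : in_u h (Dsum s) -> Dsum (swap_pairs s) = - Dsum s.
Proof.
move=> uD; apply: (herm_mx_inj hf) => u v.
rewrite mulNmx (hermNl hf) (in_u_skew _ _ uD) opprK Dsum_adjoint /swap_pairs.
by rewrite -map_comp map_id_in // => -[].
Qed.

(* The fundamental identity: skew-hermitian sums of [D]'s act by derivations. *)
Lemma Dsum_derivation s v w z : in_u h (Dsum s) ->
  Dsum s *m br v w z =
  br (Dsum s *m v) w z + br v (Dsum s *m w) z + br v w (Dsum s *m z).
Proof.
move=> uD; rewrite !DsumE.
under eq_bigr => p _ do rewrite br_fundamental.
rewrite !big_split /= -br_sum1 -br_sum3 sumrN -br_sum2.
have -> : \sum_(p <- s) br p.2 p.1 w = Dsum (swap_pairs s) *m w.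
  by rewrite DsumE /swap_pairs big_map.
by rewrite Dsum_swap_in_u // mulNmx brN2 opprK -!DsumE.
Qed.

Lemma Dsum_comm_Dmx s v w : in_u h (Dsum s) ->
  Dsum s * Dmx v w - Dmx v w * Dsum s = Dmx (Dsum s *m v) w + Dmx v (Dsum s *m w).
Proof.
move=> uD; apply: mx_ext => z.
by rewrite -!mulmxE mulmxBl mulmxDl -!mulmxA !DmxE Dsum_derivation // addrK.
Qed.

(* [ad_pairs X s] encodes [X D - D X] for the [D] encoded by [s]. *)
Fixpoint ad_pairs (X : M) (s : seq (V * V)) :=
  if s is p :: s' then (X *m p.1, p.2) :: (p.1, X *m p.2) :: ad_pairs X s' else [::].

Lemma Dsum_ad s s' : in_u h (Dsum s) ->
  Dsum (ad_pairs (Dsum s) s') = Dsum s * Dsum s' - Dsum s' * Dsum s.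
Proof.
move=> uD; elim: s' => [|p s' IH]; first by rewrite /Dsum !big_nil mulr0 mul0r subrr.
rewrite /= /Dsum !big_cons -/(Dsum s') -/(Dsum (ad_pairs _ s')) IH /=.
by rewrite addrA -Dsum_comm_Dmx // mulrDr mulrDl opprD addrACA.
Qed.

Lemma pairing_ad X Y s : in_u h X ->
  pairing Y (ad_pairs X s) = - pairing (X * Y - Y * X) s.
Proof.
move=> uX; elim: s => [|p s IH]; first by rewrite /pairing !big_nil oppr0.
rewrite /= /pairing !big_cons -!/(pairing _ _) IH /=.
rewrite -!mulmxE mulmxBl -!mulmxA (hermBl hf) (in_u_skew _ _ uX).
by rewrite [in RHS]opprD; ring.
Qed.

Definition in_Dspan (X : M) := exists s, X = Dsum s.
Definition leibniz_lie (X : M) := in_u h X /\ in_Dspan X.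

(* An arbitrary representation of [Y]; by [leibniz_metricE] the metric does not
   depend on the choice. *)
Definition pairs_of (Y : M) := epsilon (inhabits [::]) (fun s => Y = Dsum s).

Lemma pairs_ofP Y : in_Dspan Y -> Y = Dsum (pairs_of Y).
Proof. exact: epsilon_spec. Qed.

Definition leibniz_metric (X Y : M) : R := complex.Re (pairing X (pairs_of Y)).

Lemma leibniz_metricE X Y s : in_Dspan X -> Y = Dsum s ->
  leibniz_metric X Y = complex.Re (pairing X s).
Proof.
move=> [sX ->] EY; rewrite /leibniz_metric !pairing_Dsum -pairs_ofP -?EY //.
by exists s.
Qed.

Lemma leibniz_lie0 : leibniz_lie 0.
Proof. by split; [exact: (in_u0 hf) | exists [::]; rewrite /Dsum big_nil]. Qed.

Lemma leibniz_lieZD (r : R) X Y :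
  leibniz_lie X -> leibniz_lie Y -> leibniz_lie (RtoC r *: X + Y).
Proof.
move=> [uX [sX EX]] [uY [sY EY]]; split; first exact: in_uZD.
by exists ([seq (RtoC r *: p.1, p.2) | p <- sX] ++ sY); rewrite Dsum_cat Dsum_scale EX EY.
Qed.

Lemma leibniz_lie_comm X Y :
  leibniz_lie X -> leibniz_lie Y -> leibniz_lie (X * Y - Y * X).
Proof.
move=> [uX [sX EX]] [uY [sY EY]]; split; first exact: in_u_comm.
by exists (ad_pairs X sY); rewrite EX Dsum_ad -?EX // EY.
Qed.

Definition Dskew x y := Dsum [:: (x, y); (- y, x)].

Lemma DskewE x y : Dskew x y = Dmx x y - Dmx y x.
Proof. by rewrite /Dskew /Dsum !big_cons big_nil addr0 DmxN1. Qed.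

Lemma leibniz_lie_Dskew x y : leibniz_lie (Dskew x y).
Proof.
split; last by exists [:: (x, y); (- y, x)].
move=> u v; rewrite {1}/Dskew Dsum_adjoint -(hermDr hf) -mulmxDl.
rewrite /swap_pairs /= DskewE /Dsum !big_cons big_nil addr0 /= DmxN2.
by rewrite addrA subrK subrr mul0mx (herm0r hf).
Qed.

Lemma leibniz_metric_Dskew X x y : leibniz_lie X ->
  leibniz_metric X (Dskew x y) = 2 * complex.Re (h (X *m x) y).
Proof.
move=> [uX lX]; rewrite (leibniz_metricE lX (erefl _)) /pairing.
rewrite !big_cons big_nil addr0 /=.
by rewrite mulmxN (hermNl hf) (in_u_skew y x uX) opprK (herm_conj hf y) Re_addJ.
Qed.

Lemma leibniz_metric_nondeg X : leibniz_lie X ->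
  (forall Y, leibniz_lie Y -> leibniz_metric X Y = 0) -> X = 0.
Proof.
move=> lX X_perp; apply: (herm_mx_inj hf) => u v; rewrite mul0mx (herm0l hf).
have := X_perp _ (leibniz_lie_Dskew u v); rewrite leibniz_metric_Dskew // => Re0.
have := X_perp _ (leibniz_lie_Dskew (iC R *: u) v).
rewrite leibniz_metric_Dskew // -scalemxAr (hermZl hf) Re_iCM => Im0.
rewrite (complex_ReIm (h (X *m u) v)).
have -> : complex.Re (h (X *m u) v) = 0 by lra.
have -> : complex.Im (h (X *m u) v) = 0 by lra.
by rewrite RtoC0 mulr0 addr0.
Qed.

Lemma leibniz_metricZD (r : R) X Y Z :
  leibniz_metric (RtoC r *: X + Y) Z = r * leibniz_metric X Z + leibniz_metric Y Z.
Proof. by rewrite /leibniz_metric pairingZD ReD Re_RtoCM. Qed.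

Lemma leibniz_metric_sym X Y :
  in_Dspan X -> in_Dspan Y -> leibniz_metric X Y = leibniz_metric Y X.
Proof.
by move=> lX lY; rewrite /leibniz_metric {1}(pairs_ofP lX) pairing_Dsum -(pairs_ofP lY).
Qed.

Lemma leibniz_metric_invariant X Y Z : leibniz_lie X -> leibniz_lie Y -> leibniz_lie Z ->
  leibniz_metric (X * Y - Y * X) Z + leibniz_metric Y (X * Z - Z * X) = 0.
Proof.
move=> lX lY [uZ [sZ EZ]]; have [_ lXY] := leibniz_lie_comm lX lY.
have [uX [sX EX]] := lX; have [_ lY'] := lY.
have E : X * Z - Z * X = Dsum (ad_pairs X sZ) by rewrite EX Dsum_ad -?EX // EZ.
by rewrite (leibniz_metricE lXY EZ) (leibniz_metricE lY' E) pairing_ad // ReN subrr.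
Qed.

Lemma leibniz_metric_pair : metric_faithful_pair h leibniz_lie leibniz_metric.
Proof.
split=> [X [] // | | | X Y |];
  [exact: leibniz_lie0 | exact: leibniz_lieZD | exact: leibniz_lie_comm | split].
- by move=> r X Y Z _ _ _; apply: leibniz_metricZD.
- by move=> X Y [_ lX] [_ lY]; apply: leibniz_metric_sym.
- exact: leibniz_metric_nondeg.
- exact: leibniz_metric_invariant.
Qed.

Lemma DskewZ c x y : Dskew (c *: x) y = c *: Dmx x y - c^* *: Dmx y x.
Proof. by rewrite DskewE DmxZ1 DmxZ2. Qed.

(* [D(x,y) = X1 + i X2] with [X1 = Dskew (x/2) y] and [X2 = Dskew (-i x/2) y]. *)
Lemma leibniz_corresponds : corresponds h br leibniz_lie leibniz_metric.
Proof.
move=> x y; pose a : C := RtoC 2^-1; pose c : C := - (iC R * a).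
have ac1 : a + iC R * c = 1.
  by rewrite /c /a /RtoC /iC; simpc; congr Complex; field.
have ac0 : a^* + iC R * c^* = 0.
  by rewrite /c /a /RtoC /iC; simpc; congr Complex; field.
exists (Dskew (a *: x) y), (Dskew (c *: x) y); split; try exact: leibniz_lie_Dskew.
  move=> z; rewrite -DmxE; congr (_ *m _).
  rewrite !DskewZ scalerBr !scalerA addrACA -opprD -!scalerDl ac1 ac0.
  by rewrite scale0r subr0 scale1r.
move=> X lX; rewrite !leibniz_metric_Dskew // -!scalemxAr !(hermZl hf).
rewrite {1}(complex_ReIm (h (X *m x) y)) /c /a; case: (h (X *m x) y) => p q.
by rewrite /RtoC /iC; simpc => /=; congr Complex; field.
Qed.

End LeibnizToPair.

Section MetricPair.
Variables (R : realType) (n : nat).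
Local Notation C := R[i].
Local Notation V := 'cV[C]_n.
Local Notation M := 'M[C]_n.
Variables (h : V -> V -> C) (g : M -> Prop) (B : M -> M -> R).
Hypotheses (hf : hermitian_form h) (mp : metric_faithful_pair h g B).

Lemma lie_in_u X : g X -> in_u h X. Proof. by case: mp => H _ _ _ _; apply: H. Qed.
Lemma lie_subspace : real_subspace g. Proof. by case: mp => _ H0 H _ _; split. Qed.
Lemma lie_comm X Y : g X -> g Y -> g (X * Y - Y * X).
Proof. by case: mp => _ _ _ H _; apply: H. Qed.
Lemma metricZDl (r : R) X Y Z : g X -> g Y -> g Z ->
  B (RtoC r *: X + Y) Z = r * B X Z + B Y Z.
Proof. by case: mp => _ _ _ _ [H _ _ _]; apply: H. Qed.
Lemma metric_sym X Y : g X -> g Y -> B X Y = B Y X.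
Proof. by case: mp => _ _ _ _ [_ H _ _]; apply: H. Qed.
Lemma metric_nondeg X : g X -> (forall Y, g Y -> B X Y = 0) -> X = 0.
Proof. by case: mp => _ _ _ _ [_ _ H _]; apply: H. Qed.

Lemma metric_nondegr X : g X -> (forall Y, g Y -> B Y X = 0) -> X = 0.
Proof.
by move=> gX X_perp; apply: metric_nondeg => // Y gY; rewrite metric_sym ?X_perp.
Qed.

Let gZD := rsubZD lie_subspace.
Let gN := rsubN lie_subspace.
Let gD := rsubD lie_subspace.
Let gB := rsubB lie_subspace.
Let metricZDr := rformZDr lie_subspace metricZDl metric_sym.
Let metricDr := rformDr lie_subspace metricZDl metric_sym.
Let metricNr := rformNr lie_subspace metricZDl metric_sym.
Let metricBr := rformBr lie_subspace metricZDl metric_sym.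

Lemma metric_invariant X A Y : g X -> g A -> g Y ->
  B X (A * Y - Y * A) = B (X * A - A * X) Y.
Proof.
move=> gX gA gY; have gXA := lie_comm gX gA.
case: mp => _ _ _ _ [_ _ _ /(_ A X Y gA gX gY)].
rewrite -[A * X - X * A]opprB metric_sym; [|exact: gN|by []].
by rewrite metricNr // metric_sym //; lra.
Qed.

(* The metric extended complex-bilinearly, paired with [W1 + i W2]. *)
Definition metricC X W1 W2 := RtoC (B X W1) + iC R * RtoC (B X W2).

Definition represents x y W1 W2 :=
  [/\ g W1, g W2 & forall X, g X -> h (X *m x) y = metricC X W1 W2].

Lemma metricC_inj W1 W2 W1' W2' : g W1 -> g W2 -> g W1' -> g W2' ->
  (forall X, g X -> metricC X W1 W2 = metricC X W1' W2') -> W1 = W1' /\ W2 = W2'.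
Proof.
move=> gW1 gW2 gW1' gW2' E.
have {}E X : g X -> B X W1 = B X W1' /\ B X W2 = B X W2'.
  by move=> gX; apply: RtoC_ReIm_inj; apply: E.
split; apply/subr0_eq/metric_nondegr; try exact: gB.
  by move=> Y gY; rewrite metricBr // (proj1 (E Y gY)) subrr.
by move=> Y gY; rewrite metricBr // (proj2 (E Y gY)) subrr.
Qed.

Lemma represents_uniq x y W1 W2 W1' W2' :
  represents x y W1 W2 -> represents x y W1' W2' -> W1 = W1' /\ W2 = W2'.
Proof.
move=> [gW1 gW2 E] [gW1' gW2' E']; apply: metricC_inj => // X gX.
by rewrite -E // -E'.
Qed.

Lemma represents_exists x y : exists W : M * M, represents x y W.1 W.2.
Proof.
have ReL : rlinear g (fun X => complex.Re (h (X *m x) y)).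
  by move=> r X Y _ _ /=; rewrite mulmxDl -scalemxAl (hermZDl hf) ReD Re_RtoCM.
have ImL : rlinear g (fun X => complex.Im (h (X *m x) y)).
  by move=> r X Y _ _ /=; rewrite mulmxDl -scalemxAl (hermZDl hf) ImD Im_RtoCM.
have [W1 gW1 E1] := riesz_repr lie_subspace metricZDl metric_sym metric_nondeg ReL.
have [W2 gW2 E2] := riesz_repr lie_subspace metricZDl metric_sym metric_nondeg ImL.
by exists (W1, W2); split=> // X gX; rewrite /metricC E1 // E2 // -complex_ReIm.
Qed.

Definition Dcomp x y :=
  epsilon (inhabits (0, 0)) (fun W : M * M => represents x y W.1 W.2).
Definition Drep x y := (Dcomp x y).1 + iC R *: (Dcomp x y).2.

Lemma DcompP x y : represents x y (Dcomp x y).1 (Dcomp x y).2.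
Proof. exact: (epsilon_spec _ _ (represents_exists x y)). Qed.

Lemma Drep_eq x y W1 W2 : represents x y W1 W2 -> Drep x y = W1 + iC R *: W2.
Proof. by move=> rW; have [<- <-] := represents_uniq (DcompP x y) rW. Qed.

Lemma Drep_ZD a x y v w v' w' :
  (forall X, g X -> h (X *m x) y = a * h (X *m v) w + h (X *m v') w') ->
  Drep x y = a *: Drep v w + Drep v' w'.
Proof.
move=> Exy; rewrite [Drep v w]/Drep [Drep v' w']/Drep.
case: (DcompP v w) (DcompP v' w').
move: (Dcomp v w) (Dcomp v' w') => [W1 W2] [W1' W2'] /= gW1 gW2 EW [gW1' gW2' EW'].
rewrite (complex_ReIm a) in Exy *; set ar := complex.Re a; set ai := complex.Im a.
rewrite (@Drep_eq x y (RtoC ar *: W1 + (RtoC (- ai) *: W2 + W1'))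
                      (RtoC ai *: W1 + (RtoC ar *: W2 + W2'))).
  apply/matrixP => i j; rewrite !mxE RtoCN; ring: (iC_sqr R).
have gU1 : g (RtoC (- ai) *: W2 + W1') by exact: gZD.
have gU2 : g (RtoC ar *: W2 + W2') by exact: gZD.
split=> [||X gX]; try exact: gZD.
rewrite Exy // EW // EW' // /metricC !metricZDr // !RtoCD !RtoCM RtoCN.
ring: (iC_sqr R).
Qed.

Lemma DrepZD1 a v v' w : Drep (a *: v + v') w = a *: Drep v w + Drep v' w.
Proof. by apply: Drep_ZD => X gX; rewrite mulmxDr -scalemxAr (hermZDl hf). Qed.

Lemma DrepZD2 a v w w' : Drep v (a *: w + w') = a^* *: Drep v w + Drep v w'.
Proof. by apply: Drep_ZD => X gX; rewrite (hermDr hf) (hermZr hf). Qed.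

Lemma represents_swap v w W1 W2 : represents v w W1 W2 -> represents w v (- W1) W2.
Proof.
case=> gW1 gW2 E; split=> // [|X gX]; first exact: gN.
rewrite (in_u_skew _ _ (lie_in_u gX)) (herm_conj hf w) E // /metricC metricNr //.
rewrite rmorphD /= rmorphM /= !conj_RtoC conj_iC RtoCN; ring.
Qed.

Lemma Drep_swap v w : Drep w v = - (Dcomp v w).1 + iC R *: (Dcomp v w).2.
Proof. exact/Drep_eq/represents_swap/DcompP. Qed.

Lemma Drep_unitary v w x y : h (Drep v w *m x) y = h x (Drep w v *m y).
Proof.
rewrite [Drep w v]Drep_swap /Drep; case: (DcompP v w) => gW1 gW2 _.
rewrite !mulmxDl mulNmx -!scalemxAl (hermDl hf) (hermZl hf).
rewrite (hermDr hf) (hermNr hf) (hermZr hf).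
by rewrite !(in_u_skew _ _ (lie_in_u _)) // conj_iC; ring.
Qed.

Lemma Drep_symmetry v w x y : h (Drep v w *m x) y = h (Drep x y *m v) w.
Proof.
rewrite /Drep; case: (DcompP v w) (DcompP x y) => gW1 gW2 EW [gU1 gU2 EU].
rewrite !mulmxDl -!scalemxAl !(hermDl hf) !(hermZl hf) EW // EW // EU // EU //.
by rewrite /metricC (metric_sym gW1 gU1) (metric_sym gW1 gU2) (metric_sym gW2 gU1)
  (metric_sym gW2 gU2); ring.
Qed.


Lemma DrepZ1 a v w : Drep (a *: v) w = a *: Drep v w.
Proof.
exact: (semilinZ (sigma := id) (f := Drep^~ w)
  (erefl _) (fun a v v' => DrepZD1 a v v' w)).
Qed.
Lemma DrepD1 v v' w : Drep (v + v') w = Drep v w + Drep v' w.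
Proof.
exact: (semilinD (sigma := id) (f := Drep^~ w)
  (erefl _) (fun a v v' => DrepZD1 a v v' w)).
Qed.
Lemma DrepZ2 a v w : Drep v (a *: w) = a^* *: Drep v w.
Proof.
exact: (semilinZ (sigma := Num.conj) (f := Drep v)
  (conjC1 _) (fun a w w' => DrepZD2 a v w w')).
Qed.
Lemma DrepD2 v w w' : Drep v (w + w') = Drep v w + Drep v w'.
Proof.
exact: (semilinD (sigma := Num.conj) (f := Drep v)
  (conjC1 _) (fun a w w' => DrepZD2 a v w w')).
Qed.
Lemma DrepN2 v w : Drep v (- w) = - Drep v w.
Proof.
exact: (semilinN (sigma := Num.conj) (f := Drep v)
  (conjC1 _) (fun a w w' => DrepZD2 a v w w')).
Qed.

Lemma comm_iDr (A Y1 Y2 : M) :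
  A * (Y1 + iC R *: Y2) - (Y1 + iC R *: Y2) * A =
  (A * Y1 - Y1 * A) + iC R *: (A * Y2 - Y2 * A).
Proof.
by rewrite -!mulmxE mulmxDr mulmxDl -scalemxAr -scalemxAl scalerBr opprD addrACA.
Qed.

Lemma comm_iDl (A Y1 Y2 : M) :
  (Y1 + iC R *: Y2) * A - A * (Y1 + iC R *: Y2) =
  (Y1 * A - A * Y1) + iC R *: (Y2 * A - A * Y2).
Proof.
by rewrite -!mulmxE mulmxDr mulmxDl -scalemxAr -scalemxAl scalerBr opprD addrACA.
Qed.

(* Ad-invariance of the metric makes [D] equivariant under [g]. *)
Lemma Drep_equivariant A v w : g A ->
  A * Drep v w - Drep v w * A = Drep (A *m v) w + Drep v (A *m w).
Proof.
move=> gA; rewrite /Drep.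
case: (DcompP v w) (DcompP (A *m v) w) (DcompP v (A *m w)).
move: (Dcomp v w) (Dcomp (A *m v) w) (Dcomp v (A *m w)) => [Y1 Y2] [Z1 Z2] [U1 U2] /=.
move=> gY1 gY2 EY [gZ1 gZ2 EZ] [gU1 gU2 EU].
have [E1 E2] : A * Y1 - Y1 * A = Z1 + U1 /\ A * Y2 - Y2 * A = Z2 + U2.
  apply: metricC_inj; try exact: lie_comm; try exact: gD.
  move=> X gX; rewrite /metricC !metric_invariant // !metricDr // !RtoCD.
  have -> : RtoC (B (X * A - A * X) Y1) + iC R * RtoC (B (X * A - A * X) Y2) =
            h ((X * A - A * X) *m v) w by rewrite EY //; exact: lie_comm.
  rewrite -mulmxE mulmxBl -!mulmxA (hermBl hf) (in_u_skew _ _ (lie_in_u gA)) opprK.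
  by rewrite EZ // EU // /metricC; ring.
by rewrite comm_iDr E1 E2 scalerDr addrACA.
Qed.

Lemma Drep_fundamental x y v w :
  Drep x y * Drep v w - Drep v w * Drep x y =
  Drep (Drep x y *m v) w - Drep v (Drep y x *m w).
Proof.
rewrite [Drep y x]Drep_swap [Drep x y]/Drep; case: (DcompP x y) => gX1 gX2 _.
move: (Dcomp x y) gX1 gX2 => [X1 X2] /= gX1 gX2.
rewrite comm_iDl !Drep_equivariant // mulmxDl mulmxDl mulNmx -!scalemxAl.
rewrite DrepD1 DrepZ1 DrepD2 DrepN2 DrepZ2 conj_iC.
by apply/matrixP => i j; rewrite !mxE; ring.
Qed.

Lemma Drep_unitary3Leibniz : unitary3Leibniz h (fun x y z => Drep x y *m z).
Proof.
split=> [a v v' w x|a v w w' x|a v w x x'||].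
- by rewrite DrepZD1 mulmxDl -scalemxAl.
- by rewrite DrepZD2 mulmxDl -scalemxAl.
- by rewrite mulmxDr -scalemxAr.
- exact: Drep_unitary.
split=> [|x y v w z]; first exact: Drep_symmetry.
rewrite !mulmxA -[Drep x y *m Drep v w](subrK (Drep v w *m Drep x y)).
by rewrite !mulmxE Drep_fundamental -!mulmxE mulmxDl mulmxBl.
Qed.

Lemma Drep_corresponds : corresponds h (fun x y z => Drep x y *m z) g B.
Proof. by move=> x y; case: (DcompP x y) => *; exists (Dcomp x y).1, (Dcomp x y).2. Qed.

End MetricPair.

Section Generation.
Variables (R : realType) (n : nat).
Local Notation C := R[i].
Local Notation V := 'cV[C]_n.
Local Notation M := 'M[C]_n.
Variables (h : V -> V -> C) (br : V -> V -> V -> V) (g : M -> Prop) (B : M -> M -> R).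
Hypotheses (hf : hermitian_form h) (mp : metric_faithful_pair h g B)
  (co : corresponds h br g B).

Lemma corresponds_Drep x y z : br x y z = Drep h g B x y *m z.
Proof.
by have [X1 [X2 [gX1 gX2 -> E]]] := co x y; rewrite (Drep_eq hf mp (And3 gX1 gX2 E)).
Qed.

(* Faithfulness of [V] and nondegeneracy of [B] make the components of the
   [D(x,y)] span [g]. *)
Lemma lie_generated S : real_subspace S -> (forall X, S X -> g X) ->
  (forall x y, S (Dcomp h g B x y).1 /\ S (Dcomp h g B x y).2) ->
  forall X, g X -> S X.
Proof.
move=> sS Sg SD.
apply: (subspace_orthogonal0_full (lie_subspace mp) (metricZDl mp) (metric_sym mp) sS Sg).
move=> X gX X_perp; apply: (herm_mx_inj hf) => u v; rewrite mul0mx (herm0l hf).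
case: (DcompP hf mp u v) (SD u v) => _ _ -> // [S1 S2].
by rewrite /metricC !X_perp // mulr0 addr0.
Qed.

End Generation.

Section Transport.
Variables (R : realType) (n m : nat).
Local Notation C := R[i].
Local Notation V := 'cV[C]_n.
Local Notation V' := 'cV[C]_m.
Local Notation M := 'M[C]_n.
Local Notation M' := 'M[C]_m.
Variables (h : V -> V -> C) (br : V -> V -> V -> V) (g : M -> Prop) (B : M -> M -> R).
Variables (h' : V' -> V' -> C) (br' : V' -> V' -> V' -> V') (g' : M' -> Prop)
  (B' : M' -> M' -> R).
Hypotheses (hf : hermitian_form h) (mp : metric_faithful_pair h g B)
  (co : corresponds h br g B).
Hypotheses (hf' : hermitian_form h') (mp' : metric_faithful_pair h' g' B')
  (co' : corresponds h' br' g' B').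
Variable phi : V -> V'.
Hypotheses (phiL : clinear phi) (phiS : forall w, exists v, phi v = w)
  (phiI : forall x y, h' (phi x) (phi y) = h x y)
  (phiB : forall x y z, phi (br x y z) = br' (phi x) (phi y) (phi z)).

Let phiD := semilinD (sigma := id) (erefl _) phiL.
Let phiZ := semilinZ (sigma := id) (erefl _) phiL.
Let phi0 := semilin0 (sigma := id) (erefl _) phiL.

Lemma conj_by_uniq X Y Y' : conj_by phi X Y -> conj_by phi X Y' -> Y = Y'.
Proof. by move=> cY cY'; apply: mx_ext => w; have [v <-] := phiS w; rewrite cY cY'. Qed.

(* Skew-hermitian [W1, W2] are determined by [W1 + i W2]. *)
Lemma conj_by_skew_parts W1 W2 W1' W2' :
  in_u h W1 -> in_u h W2 -> in_u h' W1' -> in_u h' W2' ->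
  (forall u, (W1' + iC R *: W2') *m phi u = phi ((W1 + iC R *: W2) *m u)) ->
  conj_by phi W1 W1' /\ conj_by phi W2 W2'.
Proof.
move=> uW1 uW2 uW1' uW2' E.
pose a u := W1' *m phi u - phi (W1 *m u); pose b u := W2' *m phi u - phi (W2 *m u).
have skew_defect W W' u v : in_u h W -> in_u h' W' ->
    h' (W' *m phi u - phi (W *m u)) (phi v) = - h' (phi u) (W' *m phi v - phi (W *m v)).
  move=> uW uW'; rewrite (hermBl hf') (hermBr hf') phiI.
  rewrite (in_u_skew _ _ uW') (in_u_skew _ _ uW).
  by rewrite -phiI; ring.
have a_ib u : a u = - (iC R *: b u).
  apply/eqP; rewrite -addr_eq0 /a /b scalerBr addrACA scalemxAl -mulmxDl E.
  by rewrite mulmxDl -scalemxAl phiD phiZ -opprD subrr.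
have b0 v : b v = 0.
  apply: (herm_nondegr hf') => w; have [u <-] := phiS w.
  have := skew_defect _ _ u v uW1 uW1'; rewrite -/(a u) -/(a v) !a_ib.
  rewrite (hermNl hf') (hermZl hf') (skew_defect _ _ u v uW2 uW2').
  rewrite (hermNr hf') (hermZr hf').
  by rewrite conj_iC mulrN !opprK mulNr; exact: iCM_eqN.
by split=> v; apply/subr0_eq; rewrite -/(a v) -/(b v) ?a_ib b0 ?scaler0 ?oppr0.
Qed.

Lemma conj_by_Dcomp x y :
  conj_by phi (Dcomp h g B x y).1 (Dcomp h' g' B' (phi x) (phi y)).1 /\
  conj_by phi (Dcomp h g B x y).2 (Dcomp h' g' B' (phi x) (phi y)).2.
Proof.
case: (DcompP hf mp x y) (DcompP hf' mp' (phi x) (phi y)) => gW1 gW2 _ [gW1' gW2' _].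
apply: conj_by_skew_parts => [||||u]; try exact: (lie_in_u mp); try exact: (lie_in_u mp').
have := phiB x y u.
by rewrite (corresponds_Drep hf mp co) (corresponds_Drep hf' mp' co') => /esym.
Qed.

Lemma conj_by0 : conj_by phi 0 0.
Proof. by move=> v; rewrite !mul0mx phi0. Qed.

Lemma conj_byZD r X Y X' Y' : conj_by phi X X' -> conj_by phi Y Y' ->
  conj_by phi (RtoC r *: X + Y) (RtoC r *: X' + Y').
Proof. by move=> cX cY v; rewrite !mulmxDl -!scalemxAl cX cY phiD phiZ. Qed.

Lemma conj_exists X : g X -> exists2 Y, g' Y & conj_by phi X Y.
Proof.
move: X; pose S X := g X /\ exists2 Y, g' Y & conj_by phi X Y.
suff gS : forall X, g X -> S X by move=> X /gS [].
apply: (lie_generated hf mp) => [|X []//|x y].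
  split=> [|r X Y [gX [X' gX' cX]] [gY [Y' gY' cY]]].
    split; first exact: rsub0 (lie_subspace mp).
    by exists 0; [exact: rsub0 (lie_subspace mp') | exact: conj_by0].
  split; first exact: (rsubZD (lie_subspace mp)).
  by exists (RtoC r *: X' + Y'); [exact: (rsubZD (lie_subspace mp')) | exact: conj_byZD].
have [c1 c2] := conj_by_Dcomp x y.
case: (DcompP hf mp x y) (DcompP hf' mp' (phi x) (phi y)) => gW1 gW2 _ [gW1' gW2' _].
by split; split=> //;
  [exists (Dcomp h' g' B' (phi x) (phi y)).1 | exists (Dcomp h' g' B' (phi x) (phi y)).2].
Qed.

Lemma metric_conj_Dcomp X Y x y : g X -> g' Y -> conj_by phi X Y ->
  B' Y (Dcomp h' g' B' (phi x) (phi y)).1 = B X (Dcomp h g B x y).1 /\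
  B' Y (Dcomp h' g' B' (phi x) (phi y)).2 = B X (Dcomp h g B x y).2.
Proof.
move=> gX gY cXY; apply: RtoC_ReIm_inj.
have [_ _ EW] := DcompP hf mp x y; have [_ _ EW'] := DcompP hf' mp' (phi x) (phi y).
by rewrite -[LHS]/(metricC B' Y _ _) -[RHS]/(metricC B X _ _) -EW' // -EW // cXY phiI.
Qed.

Lemma conj_metric X1 Y1 X2 Y2 : g X1 -> g' Y1 -> conj_by phi X1 Y1 ->
  g X2 -> g' Y2 -> conj_by phi X2 Y2 -> B' Y1 Y2 = B X1 X2.
Proof.
move=> gX1 gY1 c1.
pose S X := g X /\ forall Y, g' Y -> conj_by phi X Y -> B' Y1 Y = B X1 X.
suff gS : forall X, g X -> S X by move=> /gS [_]; apply.
have sub := lie_subspace mp; have sub' := lie_subspace mp'.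
apply: (lie_generated hf mp) => [|X []//|x y].
  split=> [|r X Z [gX BX] [gZ BZ]].
    split=> [|Y gY c0]; first exact: rsub0.
    rewrite -(conj_by_uniq conj_by0 c0) (rform0r sub (metricZDl mp) (metric_sym mp)) //.
    exact: (rform0r sub' (metricZDl mp') (metric_sym mp')).
  split=> [|Y gY cY]; first exact: rsubZD.
  have [X' gX' cX] := conj_exists gX; have [Z' gZ' cZ] := conj_exists gZ.
  rewrite -(conj_by_uniq (conj_byZD r cX cZ) cY).
  rewrite (rformZDr sub (metricZDl mp) (metric_sym mp)) //.
  by rewrite (rformZDr sub' (metricZDl mp') (metric_sym mp')) // BX // BZ.
have [c1' c2'] := conj_by_Dcomp x y; have [B1 B2] := metric_conj_Dcomp x y gX1 gY1 c1.
case: (DcompP hf mp x y) => gW1 gW2 _.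
split; split=> // Y _ cY; first by rewrite -(conj_by_uniq c1' cY).
by rewrite -(conj_by_uniq c2' cY).
Qed.
End Transport.

Section Isomorphisms.
Variables (R : realType) (n m : nat).
Local Notation C := R[i].
Local Notation V := 'cV[C]_n.
Local Notation V' := 'cV[C]_m.
Local Notation M := 'M[C]_n.
Local Notation M' := 'M[C]_m.
Variables (h : V -> V -> C) (br : V -> V -> V -> V) (g : M -> Prop) (B : M -> M -> R).
Variables (h' : V' -> V' -> C) (br' : V' -> V' -> V' -> V') (g' : M' -> Prop)
  (B' : M' -> M' -> R).
Hypotheses (hf : hermitian_form h) (mp : metric_faithful_pair h g B)
  (co : corresponds h br g B).
Hypotheses (hf' : hermitian_form h') (mp' : metric_faithful_pair h' g' B')
  (co' : corresponds h' br' g' B').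

Lemma iso3Leibniz_isoPair : iso3Leibniz h br h' br' -> isoPair h g B h' g' B'.
Proof.
move=> [phi [phiL [psi phiK psiK] phiB phiI]].
have phiS w : exists v, phi v = w by exists (psi w).
have psiS v : exists w, psi w = v by exists (phi v).
have psiL : clinear psi by move=> a u v; apply: (can_inj phiK); rewrite psiK phiL !psiK.
have psiI x y : h (psi x) (psi y) = h' x y by rewrite -phiI !psiK.
have psiB x y z : psi (br' x y z) = br (psi x) (psi y) (psi z).
  by apply: (can_inj phiK); rewrite psiK phiB !psiK.
have conj_ex := conj_exists hf mp co hf' mp' co' phiL phiS phiI phiB.
exists phi; split=> //; first by exists psi.
split=> [|Y gY|X1 X2 Y1 Y2 gX1 gX2 c1 c2]; first exact: conj_ex.
  have [X gX cX] := conj_exists hf' mp' co' hf mp co psiL psiS psiI psiB gY.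
  by exists X => // v; rewrite -[v in X *m v]phiK cX psiK.
have [Y1' gY1' c1'] := conj_ex _ gX1; have [Y2' gY2' c2'] := conj_ex _ gX2.
rewrite (conj_by_uniq phiS c1 c1') (conj_by_uniq phiS c2 c2').
exact: (conj_metric hf mp co hf' mp' co' phiL phiS phiI phiB gX1 gY1' c1' gX2 gY2' c2').
Qed.

Lemma isoPair_iso3Leibniz : isoPair h g B h' g' B' -> iso3Leibniz h br h' br'.
Proof.
move=> [phi [phiL phi_bij phiI [conj_ex conj_ex' conj_B]]].
exists phi; split=> // x y z.
case: (DcompP hf mp x y) => gW1 gW2 EW.
have [Y1 gY1 c1] := conj_ex _ gW1; have [Y2 gY2 c2] := conj_ex _ gW2.
have rY : represents h' g' B' (phi x) (phi y) Y1 Y2.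
  split=> // Y gY; have [X gX cX] := conj_ex' Y gY.
  rewrite cX phiI EW // /metricC.
  by rewrite (conj_B _ _ _ _ gX gW1 cX c1) (conj_B _ _ _ _ gX gW2 cX c2).
rewrite (corresponds_Drep hf mp co) (corresponds_Drep hf' mp' co') (Drep_eq hf' mp' rY).
by rewrite !mulmxDl -!scalemxAl (semilinD (sigma := id) (erefl _) phiL)
  (semilinZ (sigma := id) (erefl _) phiL) c1 c2.
Qed.

End Isomorphisms.

Theorem mainTheorem6 (R : realType) :
  (* every unitary 3-Leibniz algebra corresponds to some pair *)
  (forall (n : nat) (h : 'cV[R[i]]_n -> 'cV[R[i]]_n -> R[i])
          (br : 'cV[R[i]]_n -> 'cV[R[i]]_n -> 'cV[R[i]]_n -> 'cV[R[i]]_n),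
      hermitian_form h -> unitary3Leibniz h br ->
      exists (g : 'M[R[i]]_n -> Prop) (B : 'M[R[i]]_n -> 'M[R[i]]_n -> R),
        metric_faithful_pair h g B /\ corresponds h br g B) /\
  (* every pair corresponds to some unitary 3-Leibniz algebra *)
  (forall (n : nat) (h : 'cV[R[i]]_n -> 'cV[R[i]]_n -> R[i])
          (g : 'M[R[i]]_n -> Prop) (B : 'M[R[i]]_n -> 'M[R[i]]_n -> R),
      hermitian_form h -> metric_faithful_pair h g B ->
      exists br : 'cV[R[i]]_n -> 'cV[R[i]]_n -> 'cV[R[i]]_n -> 'cV[R[i]]_n,
        unitary3Leibniz h br /\ corresponds h br g B) /\
  (* the correspondence is well defined and injective on isomorphism classes *)
  (forall (n m : nat)
          (h : 'cV[R[i]]_n -> 'cV[R[i]]_n -> R[i])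
          (br : 'cV[R[i]]_n -> 'cV[R[i]]_n -> 'cV[R[i]]_n -> 'cV[R[i]]_n)
          (g : 'M[R[i]]_n -> Prop) (B : 'M[R[i]]_n -> 'M[R[i]]_n -> R)
          (h' : 'cV[R[i]]_m -> 'cV[R[i]]_m -> R[i])
          (br' : 'cV[R[i]]_m -> 'cV[R[i]]_m -> 'cV[R[i]]_m -> 'cV[R[i]]_m)
          (g' : 'M[R[i]]_m -> Prop) (B' : 'M[R[i]]_m -> 'M[R[i]]_m -> R),
      hermitian_form h -> unitary3Leibniz h br -> metric_faithful_pair h g B ->
      corresponds h br g B ->
      hermitian_form h' -> unitary3Leibniz h' br' -> metric_faithful_pair h' g' B' ->
      corresponds h' br' g' B' ->
      (iso3Leibniz h br h' br' <-> isoPair h g B h' g' B')).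
Proof.
split=> [n h br hf UL|]; first by exists (leibniz_lie h br), (leibniz_metric h br);
  split; [exact: leibniz_metric_pair | exact: leibniz_corresponds].
split=> [n h g B hf mp|n m h br g B h' br' g' B' hf _ mp co hf' _ mp' co'].
  by exists (fun x y z => Drep h g B x y *m z);
    split; [exact: Drep_unitary3Leibniz | exact: Drep_corresponds].
by split; [exact: iso3Leibniz_isoPair | exact: isoPair_iso3Leibniz].
Qed.
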